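(* Let $E$ be a normed space and $\tau$ a linear topology on $E$ weaker than the norm topology. Then the following are equivalent: (a) $\tau$ equals the norm topology; (b) $0_E$ is $\tau$-separated from $\mathrm{S}_E$; (c) $\overline{\mathrm{B}}_E\not\subset\overline{\mathrm{S}_E}^{\tau}$, where $\overline{\mathrm{S}_E}^{\tau}$ is the $\tau$-closure of $\mathrm{S}_E$.
   Context: $\overline{\mathrm{B}}_E$ is the closed unit ball and $\mathrm{S}_E$ the unit sphere of $E$. $0_E$ is $\tau$-separated from a set $A$ if some $\tau$-neighborhood of $0_E$ is disjoint from $A$. *)

From HB Require Import structures.
From mathcomp Require Import all_boot all_order all_algebra.
From mathcomp Require Import all_classical all_reals all_analysis.
Set Implicit Arguments. Unset Strict Implicit. Unset Printing Implicit Defensive.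
Import Order.TTheory GRing.Theory Num.Theory.
Import numFieldNormedType.Exports.
Local Open Scope classical_set_scope.
Local Open Scope ring_scope.

Section LinTop.
Variables (R : realType) (E : normedModType R).

Definition is_topology (O : set (set E)) : Prop :=
  O setT /\
  (forall (I : Type) (F : I -> set E), (forall i, O (F i)) -> O (\bigcup_(i in setT) F i)) /\
  (forall A B, O A -> O B -> O (A `&` B)).

Definition tau_nbhs (O : set (set E)) (x : E) (N : set E) : Prop :=
  exists U, O U /\ U x /\ U `<=` N.

(* A linear (vector) topology: addition E x E -> E and scalar multiplication
   R x E -> E are jointly continuous (R with its usual topology). *)
Definition linear_topology (O : set (set E)) : Prop :=
  is_topology O /\
  (forall (x y : E) (W : set E), O W -> W (x + y) ->
     exists U V, [/\ O U, U x, O V, V y &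
       forall u v, U u -> V v -> W (u + v)]) /\
  (forall (a : R) (x : E) (W : set E), O W -> W (a *: x) ->
     exists (e : R) (U : set E), [/\ 0 < e, O U, U x &
       forall b u, `|b - a| < e -> U u -> W (b *: u)]).

Definition weaker_than_norm (O : set (set E)) : Prop :=
  forall A, O A -> open A.

Definition tau_closure (O : set (set E)) (A : set E) : set E :=
  [set x | forall N, tau_nbhs O x N -> N `&` A !=set0].

Definition unit_sphere : set E := [set x | `|x| = 1].
Definition closed_unit_ball : set E := [set x | `|x| <= 1].

Definition tau_separated0 (O : set (set E)) (A : set E) : Prop :=
  exists N, tau_nbhs O 0 N /\ N `&` A = set0.

End LinTop.

From HB Require Import structures.
From mathcomp Require Import all_boot all_order all_algebra.
From mathcomp Require Import all_classical all_reals all_analysis.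
From mathcomp Require Import ring lra.
Import Order.TTheory GRing.Theory Num.Theory.
Import numFieldNormedType.Exports.
Local Open Scope classical_set_scope.
Local Open Scope ring_scope.

(* Let tau be a linear topology on a normed space E, coarser than the norm
   topology, and let S be the unit sphere.
   (a) -> (b): the open unit ball is a tau-neighbourhood of 0 missing S.
   (b) -> (a): joint continuity of (b, u) |-> b u at (0, 0) turns a
     tau-neighbourhood of 0 missing S into a norm-bounded tau-open set U
     around 0; the translates and dilates of U, which are tau-open, then
     fit inside every norm ball, so every norm-open set is tau-open.
   (b) <-> (c): if 0 is separated from S, then 0 lies in the closed ball but
     not in the tau-closure of S.  Conversely, if every tau-neighbourhood of 0
     meets S, fix y with |y| <= 1 and a tau-open V around y; a balanced
     tau-neighbourhood U of 0 with y + U in V contains some s in S, and an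
     intermediate value argument on the segment through y in direction s
     yields |b| <= 1 with |y + b s| = 1, a point of V on the sphere. *)

Section TopologyFromOpenSets.
Context {R : realType} {E : normedModType R} {O : set (set E)}.
Hypothesis Htop : is_topology O.

(* A set which is a neighbourhood of each of its points is open: it is the
   union of all its open subsets. *)
Lemma open_of_locally_open (A : set E) :
  (forall x, A x -> exists U, O U /\ U x /\ U `<=` A) -> O A.
Proof.
move=> Aloc; have [_ [Hunion _]] := Htop.
pose I := {U : set E | O U /\ U `<=` A}.
have := Hunion I (fun i : I => sval i) (fun i => proj1 (svalP i)).
suff -> : \bigcup_(i in setT) sval (i : I) = A by [].
apply/seteqP; split => [x [i _]|x /Aloc [U [OU [Ux UA]]]].
  exact: (proj2 (svalP i)).
by exists (exist _ U (conj OU UA)).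
Qed.

Lemma separated_notin_closure (A : set E) :
  tau_separated0 O A -> ~ tau_closure O A 0.
Proof. by move=> [N [N0 NA]] /(_ N N0); rewrite NA => -[]. Qed.

End TopologyFromOpenSets.

Section NormedSpaceFacts.
Context {R : realType} {E : normedModType R}.

Lemma continuous_norm_on_line (y v : E) :
  continuous (fun t : R => `|y + t *: v|).
Proof.
move=> t; apply: (@continuous_comp _ _ _ (fun t : R => y + t *: v)
  (Num.norm : E -> R)); last exact: norm_continuous.
by apply: cvgD; [exact: cvg_cst | apply: cvgZ; [exact: cvg_id | exact: cvg_cst]].
Qed.

Lemma sphere_crossing {y v : E} : `|y| <= 1 -> 1 <= `|y + v| ->
  exists2 t : R, 0 <= t <= 1 & `|y + t *: v| = 1.
Proof.
move=> y1 yv1.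
have cont : {within `[0, 1], continuous (fun t : R => `|y + t *: v|)}.
  exact/continuous_subspaceT/continuous_norm_on_line.
have [|t] := @IVT R _ 0 1 1 ler01 cont; last by rewrite in_itv; exists t.
by rewrite scale0r addr0 scale1r ge_min le_max yv1 y1 orbT.
Qed.

(* Through a point of the closed unit ball, the line directed by a unit
   vector s meets the sphere at some y + b s with |b| <= 1: one of
   y + s, y - s lies outside the open ball since their difference is 2 s. *)
Lemma sphere_on_line {y s : E} : `|y| <= 1 -> `|s| = 1 ->
  exists2 b : R, `|b| <= 1 & `|y + b *: s| = 1.
Proof.
move=> y1 s1; have [ys1|ys1] := lerP 1 `|y + s|.
  have [t /andP [t0 t1] yt1] := sphere_crossing y1 ys1.
  by exists t; rewrite ?ger0_norm.
have y_s1 : 1 <= `|y + - s|.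
  have : `|s + s| <= `|y + s| + `|y - s|.
    have -> : s + s = (y + s) - (y - s) by rewrite opprB [y + s]addrC addrCA addrK.
    exact: ler_normB.
  by rewrite -mulr2n normrMn s1; lra.
have [t /andP [t0 t1] yt1] := sphere_crossing y1 y_s1.
by exists (- t); rewrite ?normrN ?ger0_norm // scaleNr -scalerN.
Qed.

Lemma norm_topology_separates :
  tau_separated0 [set A : set E | open A] (@unit_sphere R E).
Proof.
exists (ball (0 : E) 1); split.
  by exists (ball (0 : E) 1); split; [exact: ball_open | split; [exact: ballxx|]].
apply/seteqP; split => // x [].
by rewrite -ball_normE /unit_sphere /= sub0r normrN => /[swap] ->; rewrite ltxx.
Qed.

End NormedSpaceFacts.

Section LinearTopology.
Context {R : realType} {E : normedModType R} {O : set (set E)}.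
Hypothesis Hlin : linear_topology O.

Let Htop : is_topology O. Proof. by case: Hlin. Qed.

Lemma translate_open (y : E) {W : set E} : O W -> O [set u | W (u + y)].
Proof.
move=> OW; apply: open_of_locally_open => // x /= Wxy.
have [_ [Hadd _]] := Hlin.
have [U [V [OU Ux _ Vy UVW]]] := Hadd x y W OW Wxy.
by exists U; split => //; split => // u Uu /=; apply: UVW.
Qed.

Lemma scale_open (c : R) {W : set E} : O W -> O [set u | W (c *: u)].
Proof.
move=> OW; apply: open_of_locally_open => // x /= Wcx.
have [_ [_ Hscale]] := Hlin.
have [e [U [e0 OU Ux UW]]] := Hscale c x W OW Wcx.
by exists U; split => //; split => // u Uu /=; apply: UW; rewrite // subrr normr0.
Qed.

Lemma small_scalars_nbhs0 {W : set E} : O W -> W 0 ->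
  exists e U, [/\ 0 < e, O U, U 0 & forall b u, `|b| < e -> U u -> W (b *: u)].
Proof.
move=> OW W0; have [_ [_ Hscale]] := Hlin.
have [|e [U [e0 OU U0 UW]]] := Hscale 0 0 W OW; first by rewrite scaler0.
by exists e, U; split => // b u be; apply: UW; rewrite subr0.
Qed.

Lemma balanced_nbhs0 {W : set E} : O W -> W 0 ->
  exists U, [/\ O U, U 0 & forall b u, `|b| <= 1 -> U u -> W (b *: u)].
Proof.
move=> OW W0; have [e [U0 [e0 OU0 U00 U0W]]] := small_scalars_nbhs0 OW W0.
exists [set u | U0 ((2 / e) *: u)]; split; first exact: scale_open.
  by rewrite /= scaler0.
move=> b u b1 U0u; have -> : b *: u = (b * e / 2) *: ((2 / e) *: u).
  by rewrite scalerA; congr (_ *: _); field; rewrite gt_eqF.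
apply: U0W => //; rewrite -mulrA normrM (ger0_norm (ltW (divr_gt0 e0 _))) //.
apply: (le_lt_trans (ler_piMl _ b1)); first by rewrite divr_ge0 ?ltW.
by rewrite ltr_pdivrMr // ltr_pMr // ltr1n.
Qed.

Lemma separated_bounded_nbhs0 : tau_separated0 O (@unit_sphere R E) ->
  exists r U, [/\ 0 < r, O U, U 0 & forall u, U u -> `|u| <= r].
Proof.
move=> [N [[W [OW [W0 WN]]] NS]].
have [e [U [e0 OU U0 UW]]] := small_scalars_nbhs0 OW W0.
exists e^-1, U; split; rewrite ?invr_gt0 // => u Uu.
rewrite leNgt; apply/negP => lt_u.
have u0 : 0 < `|u| by apply: lt_trans lt_u; rewrite invr_gt0.
suff : (N `&` @unit_sphere R E) (`|u|^-1 *: u) by rewrite NS.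
split; last by rewrite /unit_sphere /= normrZ normfV normr_id mulVf ?gt_eqF.
apply/WN/UW => //; rewrite normfV normr_id -(invrK e).
by rewrite ltf_pV2 ?posrE ?invr_gt0.
Qed.

(* A tau-open norm-bounded neighbourhood of 0 makes every norm-open set
   tau-open: suitable dilates of its translates fit in any given ball. *)
Lemma open_of_bounded_nbhs0 {r : R} {U : set E} :
  0 < r -> O U -> U 0 -> (forall u, U u -> `|u| <= r) ->
  forall A, open A -> O A.
Proof.
move=> r0 OU U0 Ubd A oA; apply: open_of_locally_open => // x Ax.
move: oA; rewrite openE => /(_ x Ax).
rewrite /interior -nbhs_ballE => -[d /= d0 ballA].
pose c := 2 * r / d.
have c0 : 0 < c by rewrite /c divr_gt0 // mulr_gt0.
exists [set y | U (c *: (y - x))]; split.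
  exact: (translate_open (- x) (scale_open c OU)).
split => [|y /= /Ubd]; first by rewrite /= subrr scaler0.
rewrite normrZ gtr0_norm // => bd_y; apply: ballA.
rewrite -ball_normE /= distrC; apply: (@le_lt_trans _ _ (d / 2)).
  have cd : c * d = 2 * r by rewrite /c; field; rewrite gt_eqF.
  rewrite ler_pdivlMr // -(ler_pM2l c0) mulrA cd; move: bd_y.
  rewrite distrC; set n := `|_|; move=> bd_y; nra.
by rewrite ltr_pdivrMr // ltr_pMr // ltr1n.
Qed.

Lemma closed_ball_in_closure_sphere :
  ~ tau_separated0 O (@unit_sphere R E) ->
  @closed_unit_ball R E `<=` tau_closure O (@unit_sphere R E).
Proof.
move=> nsep y y1 N [V [OV [Vy VN]]].
have V0 : [set u | V (u + y)] 0 by rewrite /= add0r.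
have [U [OU U0 UV]] := balanced_nbhs0 (translate_open y OV) V0.
have [s [Us s1]] : U `&` @unit_sphere R E !=set0.
  apply: contrapT => noS; apply: nsep; exists U.
  split; first by exists U; split => //; split.
  by apply/seteqP; split => // z USz; apply: noS; exists z.
have [b b1 yb1] := sphere_on_line y1 s1.
by exists (y + b *: s); split => //; apply/VN; rewrite addrC; exact: UV.
Qed.

End LinearTopology.

Theorem corollary2p3 (R : realType) (E : normedModType R) (O : set (set E))
  (Hlin : linear_topology O) (Hweak : weaker_than_norm O) :
  (O = [set A | open A] <-> tau_separated0 O (@unit_sphere R E)) /\
  (tau_separated0 O (@unit_sphere R E) <->
     ~ (@closed_unit_ball R E `<=` tau_closure O (@unit_sphere R E))).
Proof.
split; split.
- by move=> ->; exact: norm_topology_separates.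
- move=> /(separated_bounded_nbhs0 Hlin) [r [U [r0 OU U0 Ubd]]].
  apply/seteqP; split => [A /Hweak //|A].
  exact: (open_of_bounded_nbhs0 Hlin r0 OU U0 Ubd).
- move=> /separated_notin_closure notin0 ball_sub; apply: notin0.
  by apply: ball_sub; rewrite /closed_unit_ball /= normr0.
- move=> not_sub; apply: contrapT => nsep; apply: not_sub.
  exact: (closed_ball_in_closure_sphere Hlin).
Qed.
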